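(* Let $\mathbb{H}$ be a real Hilbert space (of dimension at least $2$) and $\mathbb{Y}$ a two-dimensional smooth and strictly convex real Banach space. Let $T\in\mathbb{L}(\mathbb{H},\mathbb{Y})$ be of rank one with $\|T\|=1$. Then $M_T=\{\pm x\}$ for some $x\in S_{\mathbb{H}}$. Moreover, $T$ is an extreme contraction if and only if $(x,Tx)$ is not a CPP.
   Context: $M_T=\{x\in S_{\mathbb{H}}:\|Tx\|=\|T\|\}$. A norm one $T$ is an extreme contraction if it is an extreme point of the closed unit ball of $\mathbb{L}(\mathbb{H},\mathbb{Y})$. $B(x,r)=\{u:\|u-x\|<r\}$. $x\perp_B y$ means $\|x+\lambda y\|\ge\|x\|$ for all real $\lambda$; $x^\perp=\{y:x\perp_By\}$. For $x\in S_{\mathbb{H}}$, $y\in S_{\mathbb{Y}}$, $(x,y)$ is a CPP if there exist $r>0,\mu>0$ such that for all $z\in x^\perp\cap S_{\mathbb{H}}$, all $w\in y^\perp\cap S_{\mathbb{Y}}$ and all $a,b\in\mathbb{R}$, $ax+bz\in B(x,r)\cap S_{\mathbb{H}}$ implies $\|ay+b\mu w\|\le1$. *)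

From HB Require Import structures.
From mathcomp Require Import all_boot all_order all_algebra.
From mathcomp Require Import all_classical all_reals all_analysis.
Set Implicit Arguments. Unset Strict Implicit. Unset Printing Implicit Defensive.
Import Order.TTheory GRing.Theory Num.Theory.
Import numFieldNormedType.Exports.
Local Open Scope classical_set_scope.
Local Open Scope ring_scope.

Section Defs.
Variable R : realType.

Definition is_inner_product (H : normedModType R) (ip : H -> H -> R) : Prop :=
  (forall x y, ip x y = ip y x) /\
  (forall (a : R) (x y z : H), ip (a *: x + y) z = a * ip x z + ip y z) /\
  (forall x, `|x| = Num.sqrt (ip x x)).

Definition dim_ge2 (V : normedModType R) : Prop :=
  exists u v : V, forall a b : R, a *: u + b *: v = 0 -> a = 0 /\ b = 0.

Definition dim_eq2 (V : normedModType R) : Prop :=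
  exists e1 e2 : V,
    (forall a b : R, a *: e1 + b *: e2 = 0 -> a = 0 /\ b = 0) /\
    (forall y : V, exists a b : R, y = a *: e1 + b *: e2).

Definition strictly_convex (V : normedModType R) : Prop :=
  forall x y : V, `|x| = 1 -> `|y| = 1 -> x != y -> `|(2%:R^-1) *: (x + y)| < 1.

Definition support_functional (V : normedModType R) (x : V) (f : V -> R) : Prop :=
  linear f /\ (forall y, `|f y| <= `|y|) /\ f x = 1.

Definition smooth (V : normedModType R) : Prop :=
  forall x : V, `|x| = 1 ->
    exists f, support_functional x f /\
      forall g, support_functional x g -> forall y, g y = f y.

Definition bounded_op (H Y : normedModType R) (T : H -> Y) : Prop :=
  linear T /\ exists k : R, forall x, `|T x| <= k * `|x|.

Definition opnorm (H Y : normedModType R) (T : H -> Y) : R :=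
  sup [set `|T x| | x in [set x : H | `|x| <= 1]].

Definition rank_one (H Y : normedModType R) (T : H -> Y) : Prop :=
  (exists y0 : Y, y0 != 0 /\ forall x, exists c : R, T x = c *: y0) /\
  (exists x, T x != 0).

Definition MT (H Y : normedModType R) (T : H -> Y) : set H :=
  [set x | `|x| = 1 /\ `|T x| = opnorm T].

Definition in_unit_ball_op (H Y : normedModType R) (A : H -> Y) : Prop :=
  bounded_op A /\ opnorm A <= 1.

Definition extreme_contraction (H Y : normedModType R) (T : H -> Y) : Prop :=
  in_unit_ball_op T /\ opnorm T = 1 /\
  forall (A B : H -> Y) (t : R), in_unit_ball_op A -> in_unit_ball_op B ->
    0 < t < 1 -> (forall x, T x = t *: A x + (1 - t) *: B x) ->
    forall x, A x = T x /\ B x = T x.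

Definition bj_orth (V : normedModType R) (x y : V) : Prop :=
  forall l : R, `|x| <= `|x + l *: y|.

Definition sphere (V : normedModType R) : set V := [set x | `|x| = 1].

Definition oball (V : normedModType R) (x : V) (r : R) : set V :=
  [set u | `|u - x| < r].

Definition CPP (H Y : normedModType R) (x : H) (y : Y) : Prop :=
  `|x| = 1 /\ `|y| = 1 /\
  exists r mu : R, 0 < r /\ 0 < mu /\
    forall (z : H) (w : Y) (a b : R),
      bj_orth x z -> `|z| = 1 -> bj_orth y w -> `|w| = 1 ->
      (oball x r `&` @sphere H) (a *: x + b *: z) ->
      `|a *: y + (b * mu) *: w| <= 1.

End Defs.

(* Write T x = <x, u> Y0 with |u| = |Y0| = 1; finding u is the Riesz representation of
   the norm-one functional x |-> coordinate of T x, and it is where completeness of H is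
   used (a maximizing sequence is Cauchy by the parallelogram law).
   If T = t A + (1 - t) B with A, B in the unit ball and A <> T, strict convexity forces
   A u = B u = Y0, so A z = v <> 0 for some unit z orthogonal to u, and then
   B (a u + b z) = a Y0 - (t / (1 - t)) b v. Since A is a contraction on the circle
   a^2 + b^2 = 1, the support functional at Y0 kills v; by smoothness and dim Y = 2, v spans
   the Birkhoff-James orthogonal directions to Y0, and interpolating between the bounds for
   A and B gives a CPP with r = 1 and mu = min(1, t / (1 - t)) |v|.
   Conversely, if (u, Y0) is a CPP with constants r and mu, then for eps = min(mu, r^2 / 2)
   and a unit w with Y0 _|_B w we get |a Y0 + b eps w| <= sqrt(a^2 + b^2), so the two
   contractions x |-> <x, u> Y0 +- eps <x, z> w average to T. *)

From HB Require Import structures.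
From mathcomp Require Import all_boot all_order all_algebra.
From mathcomp Require Import all_classical all_reals all_analysis.
From mathcomp Require Import ring lra.
Set Implicit Arguments. Unset Strict Implicit. Unset Printing Implicit Defensive.
Import Order.TTheory GRing.Theory Num.Theory.
Import numFieldNormedType.Exports.
Local Open Scope classical_set_scope.
Local Open Scope ring_scope.

Section InnerProduct.
Variables (R : realType) (H : normedModType R) (ip : H -> H -> R).
Hypothesis hip : is_inner_product ip.

Lemma ipC x y : ip x y = ip y x.
Proof. by case: hip. Qed.

Lemma ipZDl a x y z : ip (a *: x + y) z = a * ip x z + ip y z.
Proof. by case: hip => _ []. Qed.

Lemma ip0l z : ip 0 z = 0.
Proof. by have := ipZDl 1 0 0 z; rewrite scaler0 addr0 mul1r; lra. Qed.

Lemma ipDl x y z : ip (x + y) z = ip x z + ip y z.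
Proof. by rewrite -[x]scale1r ipZDl mul1r scale1r. Qed.

Lemma ipZl a x z : ip (a *: x) z = a * ip x z.
Proof. by rewrite -[a *: x]addr0 ipZDl ip0l addr0. Qed.

Lemma ipBl x y z : ip (x - y) z = ip x z - ip y z.
Proof. by rewrite ipDl -scaleN1r ipZl mulN1r. Qed.

Lemma ipDr x y z : ip z (x + y) = ip z x + ip z y.
Proof. by rewrite ipC ipDl !(ipC z). Qed.

Lemma ipZr a x z : ip z (a *: x) = a * ip z x.
Proof. by rewrite ipC ipZl ipC. Qed.

Lemma ipBr x y z : ip z (x - y) = ip z x - ip z y.
Proof. by rewrite ipC ipBl !(ipC z). Qed.

Lemma sqr_norm_ip x : `|x| ^+ 2 = ip x x.
Proof.
case: hip => _ [_ hn]; rewrite hn sqr_sqrtr //.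
have [->|x0] := eqVneq x 0; first by rewrite ip0l.
have : 0 < `|x| by rewrite normr_gt0.
by rewrite hn sqrtr_gt0 => /ltW.
Qed.

Lemma sqr_norm_comb a b (x z : H) :
  `|a *: x + b *: z| ^+ 2 = a ^+ 2 * `|x| ^+ 2 + 2 * a * b * ip x z + b ^+ 2 * `|z| ^+ 2.
Proof. by rewrite !sqr_norm_ip !ipDl !ipDr !ipZl !ipZr (ipC z x); ring. Qed.

Lemma parallelogram_law (x y : H) :
  `|x + y| ^+ 2 + `|x - y| ^+ 2 = 2 * `|x| ^+ 2 + 2 * `|y| ^+ 2.
Proof. by rewrite !sqr_norm_ip !ipBl !ipBr !ipDl !ipDr (ipC y x); ring. Qed.

Lemma bj_orthP (x z : H) : `|z| = 1 -> bj_orth x z <-> ip x z = 0.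
Proof.
move=> hz; split=> [hxz | hxz l].
  have := hxz (- ip x z); have := sqr_norm_comb 1 (- ip x z) x z.
  rewrite scale1r hz => e h.
  have : ip x z ^+ 2 <= 0 by have := normr_ge0 x; nra.
  by move=> h2; apply/eqP; rewrite -sqrf_eq0 eq_le sqr_ge0 h2.
have := sqr_norm_comb 1 l x z; rewrite scale1r hxz => e.
by rewrite -(ler_pXn2r (n := 2)) ?nnegrE // e; nra.
Qed.

Section Orthonormal.
Variables u z : H.
Hypotheses (hu : `|u| = 1) (hz : `|z| = 1) (huz : ip u z = 0).

Lemma sqr_norm_orthonormal a b : `|a *: u + b *: z| ^+ 2 = a ^+ 2 + b ^+ 2.
Proof. by rewrite sqr_norm_comb hu hz huz; ring. Qed.

Lemma norm_orthonormal_circle a b : a ^+ 2 + b ^+ 2 = 1 -> `|a *: u + b *: z| = 1.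
Proof. by move=> hab; apply/eqP; rewrite -sqrp_eq1 // sqr_norm_orthonormal hab. Qed.

Lemma bessel x : ip x u ^+ 2 + ip x z ^+ 2 <= `|x| ^+ 2.
Proof.
have huu : ip u u = 1 by rewrite -sqr_norm_ip hu expr1n.
have hzz : ip z z = 1 by rewrite -sqr_norm_ip hz expr1n.
have := sqr_ge0 `|x - ip x u *: u - ip x z *: z|.
rewrite (sqr_norm_ip (_ - _)) !ipBl !ipBr !ipZl !ipZr huu hzz huz (ipC z u) huz (ipC u x) (ipC z x).
by rewrite sqr_norm_ip; nra.
Qed.

End Orthonormal.

Lemma exists_orthogonal_unit (u : H) : dim_ge2 H -> `|u| = 1 ->
  exists z, `|z| = 1 /\ ip z u = 0.
Proof.
move=> [p [q hpq]] hu.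
have huu : ip u u = 1 by rewrite -sqr_norm_ip hu expr1n.
have orth x : ip (x - ip x u *: u) u = 0 by rewrite ipBl ipZl huu mulr1 subrr.
suff [y [y0 hy]] : exists y, y != 0 /\ ip y u = 0.
  by exists (`|y|^-1 *: y); rewrite normfZV // ipZl hy mulr0.
have [p0|] := eqVneq (p - ip p u *: u) 0; last by exists (p - ip p u *: u).
have [q0|] := eqVneq (q - ip q u *: u) 0; last by exists (q - ip q u *: u).
move/subr0_eq : p0 => ep; move/subr0_eq : q0 => eq.
have [_ /eqP] : ip q u = 0 /\ - ip p u = 0.
  apply: hpq; rewrite [in X in X + _]ep [in X in _ + X]eq !scalerA.
  by rewrite mulNr scaleNr (mulrC (ip p u)) subrr.
rewrite oppr_eq0 => /eqP p0.
have [/eqP + _] : (1 : R) = 0 /\ (0 : R) = 0.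
  by apply: hpq; rewrite ep p0 !scale0r scaler0 addr0.
by rewrite oner_eq0.
Qed.

End InnerProduct.

Section Riesz.
Variables (R : realType) (H : completeNormedModType R) (ip : H -> H -> R).
Hypothesis hip : is_inner_product ip.
Variable phi : H -> R.
Hypothesis phiZD : forall a x y, phi (a *: x + y) = a * phi x + phi y.
Hypothesis phi_le : forall x, `|phi x| <= `|x|.
Hypothesis phi_sup : forall e, 0 < e -> exists x, `|x| <= 1 /\ 1 - e < phi x.

Let phiD x y : phi (x + y) = phi x + phi y.
Proof. by rewrite -[x]scale1r phiZD mul1r scale1r. Qed.

Let phiZ a x : phi (a *: x) = a * phi x.
Proof.
have phi0 : phi 0 = 0 by have := phiZD 1 0 0; rewrite scaler0 addr0 mul1r; lra.
by rewrite -[a *: x]addr0 phiZD phi0 addr0.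
Qed.

Let phiB x y : phi (x - y) = phi x - phi y.
Proof. by rewrite addrC -scaleN1r phiZD mulN1r addrC. Qed.

Let phi_ler_norm x : phi x <= `|x|.
Proof. exact: le_trans (ler_norm _) (phi_le x). Qed.

Lemma near_max_sqr_dist x y d1 d2 : `|x| <= 1 -> `|y| <= 1 ->
  1 - d1 < phi x -> 1 - d2 < phi y -> `|x - y| ^+ 2 <= 4 * (d1 + d2).
Proof.
move=> hx hy hpx hpy.
have hxy := phi_ler_norm (x + y); rewrite phiD in hxy.
have hx2 : `|x| ^+ 2 <= 1 by rewrite expr_le1.
have hy2 : `|y| ^+ 2 <= 1 by rewrite expr_le1.
have := parallelogram_law hip x y; have := normr_ge0 (x + y).
have [d2_le|] := lerP (d1 + d2) 2; last by have := sqr_ge0 `|x + y|; nra.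
have : (2 - (d1 + d2)) ^+ 2 <= `|x + y| ^+ 2 by rewrite ler_pXn2r ?nnegrE //; lra.
nra.
Qed.

Lemma functional_attains_norm : exists u, `|u| = 1 /\ phi u = 1.
Proof.
have /choice [s hs] : forall n, exists x, `|x| <= 1 /\ 1 - harmonic n < phi x.
  by move=> n; apply/phi_sup/harmonic_gt0.
have s_close n m : `|s n - s m| ^+ 2 <= 4 * (harmonic n + harmonic m).
  by have [? ?] := hs n; have [? ?] := hs m; exact: near_max_sqr_dist.
have harmonic_small (e : R) : 0 < e -> \forall n \near \oo, harmonic n < e.
  by move=> e0; have := near_infty_natSinv_lt (PosNum e0); apply: filterS.
have : cvg (s @ \oo).
  apply: cauchy_cvg; apply: cauchy_exP => e e0.
  have [N _ hN] := harmonic_small (e ^+ 2 / 8) (divr_gt0 (exprn_gt0 _ e0) (ltr0Sn _ 7)).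
  exists (s N); exists N => // n /= hn; rewrite -ball_normE /ball_ /=.
  have := s_close N n; have := hN _ (leqnn N); have := hN _ hn.
  by move=> *; rewrite -(ltr_pXn2r (n := 2)) ?nnegrE ?(ltW e0) //; lra.
set u := lim (s @ \oo) => /cvgrPdist_lt s_to_u.
have u_near e : 0 < e -> `|u| <= 1 + e /\ 1 - 2 * e <= phi u.
  move=> e0; near \oo => n.
  have [sn1 sn_max] := hs n.
  have hun : `|u - s n| < e by near: n; exact: s_to_u.
  have hn : harmonic n < e by near: n; exact: harmonic_small.
  have := ler_distD (s n) u 0; rewrite !subr0.
  have := phi_le (u - s n); rewrite phiB ler_norml => /andP[? _].
  by split; lra.
have u_le1 : `|u| <= 1.
  by apply/ler_addgt0Pr => e /u_near[].
have phi_ge1 : 1 <= phi u.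
  apply/ler_addgt0Pr => e e0; have [_] := u_near (e / 2) (divr_gt0 e0 (ltr0Sn _ 1)).
  lra.
by exists u; have := phi_ler_norm u; split; lra.
Unshelve. all: by end_near.
Qed.

Lemma functional_orth_kernel u z : `|u| = 1 -> phi u = 1 -> ip u z = 0 -> phi z = 0.
Proof.
move=> hu hpu huz; set c := phi z; set n2 := `|z| ^+ 2.
(* phi (t z + u) = t c + 1 would exceed |t z + u| for t = c / (|z|^2 + 1) unless c = 0. *)
have n2_ge0 : 0 <= n2 := sqr_ge0 _.
set t := c / (n2 + 1).
have ct : c = t * (n2 + 1) by rewrite /t divfK // gt_eqF //; lra.
have := phi_ler_norm (t *: z + u); rewrite phiZD hpu -/c.
have := sqr_norm_comb hip t 1 z u; rewrite scale1r hu (ipC hip) huz -/n2.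
move=> sqr_eq le_norm.
have : (t * c + 1) ^+ 2 <= t ^+ 2 * n2 + 1.
  rewrite [X in _ <= X](_ : _ = `|t *: z + u| ^+ 2); last by rewrite sqr_eq; ring.
  by rewrite ler_pXn2r ?nnegrE //; rewrite ct; nra.
rewrite ct => h; apply/eqP; rewrite mulf_eq0; apply/orP; left.
by rewrite -sqrf_eq0 eq_le sqr_ge0 andbT; nra.
Qed.

Lemma riesz_representation : exists u, `|u| = 1 /\ forall x, phi x = ip x u.
Proof.
have [u [hu hpu]] := functional_attains_norm.
exists u; split => // x.
have huu : ip u u = 1 by rewrite -(sqr_norm_ip hip) hu expr1n.
have /functional_orth_kernel : ip u (x - ip x u *: u) = 0.
  by rewrite (ipC hip) (ipBl hip) (ipZl hip) huu mulr1 subrr.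
by rewrite phiB phiZ hpu mulr1 => /(_ hu erefl) /eqP; rewrite subr_eq0 => /eqP.
Qed.

End Riesz.

Lemma strictly_convex_comb_eq (R : realType) (Y : normedModType R) (p q : Y) t :
  strictly_convex Y -> `|p| <= 1 -> `|q| <= 1 -> 0 < t < 1 ->
  `|t *: p + (1 - t) *: q| = 1 -> p = q.
Proof.
move=> hsc; wlog ht : p q t / t <= 2^-1 => [hw hp hq t01 hn | hp hq /andP[t0 t1] hn].
  have [|ht] := lerP t 2^-1; first by move/hw; apply.
  apply/esym/(hw q p (1 - t)) => //; first lra.
    by move/andP: t01 => [? ?]; apply/andP; split; lra.
  by rewrite subKr [_ + t *: p]addrC.
have hle : `|t *: p + (1 - t) *: q| <= t * `|p| + (1 - t) * `|q|.
  by apply: le_trans (ler_normD _ _) _; rewrite !normrZ !ger0_norm //; lra.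
have hp1 : `|p| = 1 by nra.
have hq1 : `|q| = 1 by nra.
apply/eqP; apply: contraT => hpq.
have hm := hsc p q hp1 hq1 hpq.
have e : t *: p + (1 - t) *: q = (2 * t) *: (2%:R^-1 *: (p + q)) + (1 - 2 * t) *: q.
  rewrite scalerA mulrAC divff ?pnatr_eq0 // mul1r scalerDr -addrA -scalerDl.
  by congr (_ + _ *: _); ring.
have : 1 <= 2 * t * `|2%:R^-1 *: (p + q)| + (1 - 2 * t) * `|q|.
  rewrite -[X in X <= _]hn e; apply: le_trans (ler_normD _ _) _.
  by rewrite !normrZ !ger0_norm //; lra.
have : 0 < t * (1 - `|2%:R^-1 *: (p + q)|) by rewrite mulr_gt0 // subr_gt0.
rewrite hq1 mulr1 => ? ?; suff : 1 < (1 : R) by rewrite ltxx.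
nra.
Qed.

Section TwoDimensional.
Variables (R : realType) (Y : normedModType R).

Definition lin_indep2 (p q : Y) := forall a b : R, a *: p + b *: q = 0 -> a = 0 /\ b = 0.

Lemma lin_indep2_coordI p q a b a' b' : lin_indep2 p q ->
  a *: p + b *: q = a' *: p + b' *: q -> a = a' /\ b = b'.
Proof.
move=> hpq e; have [] : a - a' = 0 /\ b - b' = 0.
  by apply: hpq; rewrite !scalerBl addrACA e addrACA !subrr addr0.
by move=> /subr0_eq -> /subr0_eq ->.
Qed.

Lemma lin_indep2_span p q : dim_eq2 Y -> lin_indep2 p q ->
  forall y, exists a b, y = a *: p + b *: q.
Proof.
case=> e1 [e2 [_ hs]]; have [p1 [p2 ->]] := hs p; have [q1 [q2 ->]] := hs q.
move=> hpq y; have [y1 [y2 ->]] := hs y.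
have E a b : a *: (p1 *: e1 + p2 *: e2) + b *: (q1 *: e1 + q2 *: e2) =
    (a * p1 + b * q1) *: e1 + (a * p2 + b * q2) *: e2.
  by rewrite !scalerDr !scalerA addrACA -!scalerDl.
set D := p1 * q2 - p2 * q1.
have [D0|D0] := eqVneq D 0; last first.
  exists ((y1 * q2 - y2 * q1) / D), ((y2 * p1 - y1 * p2) / D).
  by rewrite E; congr (_ *: _ + _ *: _); rewrite /D; field.
have [_ /eqP] : q2 = 0 /\ - p2 = 0.
  apply: hpq; rewrite E (_ : q2 * p1 + - p2 * q1 = 0); last by rewrite -D0 /D; ring.
  by rewrite mulNr mulrC addrN !scale0r addr0.
have [_ /eqP] : q1 = 0 /\ - p1 = 0.
  apply: hpq; rewrite E (_ : q1 * p2 + - p1 * q2 = 0); last by rewrite -oppr0 -D0 /D; ring.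
  by rewrite mulNr mulrC addrN !scale0r addr0.
rewrite !oppr_eq0 => /eqP p10 /eqP p20.
have [/eqP] : (1 : R) = 0 /\ (0 : R) = 0.
  by apply: hpq; rewrite p10 p20 !scale0r !addr0 scaler0.
by rewrite oner_eq0.
Qed.

End TwoDimensional.

Section SupportFunctional.
Variables (R : realType) (Y : normedModType R) (y0 : Y) (f : Y -> R).
Hypothesis hf : support_functional y0 f.

Lemma sfZD a x y : f (a *: x + y) = a * f x + f y.
Proof. by case: hf => lf _; rewrite lf. Qed.

Lemma sf0 : f 0 = 0.
Proof. by have := sfZD 1 0 0; rewrite scaler0 addr0 mul1r; lra. Qed.

Lemma sfZ a x : f (a *: x) = a * f x.
Proof. by rewrite -[a *: x]addr0 sfZD sf0 addr0. Qed.

Lemma sfD x y : f (x + y) = f x + f y.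
Proof. by have := sfZD 1 x y; rewrite scale1r mul1r. Qed.

Lemma support_functional_bj_orth w : `|y0| = 1 -> f w = 0 -> bj_orth y0 w.
Proof.
case: hf => _ [f_le f_y0] hy0 fw l; rewrite hy0.
by have := f_le (y0 + l *: w); rewrite sfD sfZ fw mulr0 addr0 f_y0 normr1.
Qed.

Lemma support_functional_circle_eq0 v :
  (forall a b, a ^+ 2 + b ^+ 2 = 1 -> `|a *: y0 + b *: v| <= 1) -> f v = 0.
Proof.
case: hf => _ [f_le f_y0] hv; set c := f v.
have c2 : 0 <= c ^+ 2 := sqr_ge0 c.
set r := Num.sqrt (1 + c ^+ 2).
have r0 : 0 < r by rewrite sqrtr_gt0; lra.
have rr : r ^+ 2 = 1 + c ^+ 2 by rewrite sqr_sqrtr //; lra.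
have hab : r^-1 ^+ 2 + (c / r) ^+ 2 = 1.
  by rewrite exprVn expr_div_n rr; field; apply: lt0r_neq0; lra.
have := le_trans (f_le _) (hv _ _ hab); rewrite sfD !sfZ f_y0 -/c.
rewrite (_ : r^-1 * 1 + c / r * c = r); last first.
  by apply: (mulIf (lt0r_neq0 r0)); rewrite -expr2 rr; field; exact: lt0r_neq0.
rewrite gtr0_norm // => r_le1.
have : c ^+ 2 <= 0 by rewrite -(lerD2l 1) addr0 -rr expr_le1 // ltW.
by move=> h; apply/eqP; rewrite -sqrf_eq0 eq_le h c2.
Qed.

Lemma support_functional_kernel : dim_eq2 Y -> exists w, `|w| = 1 /\ f w = 0.
Proof.
case=> e1 [e2 [he hs]].
set w := f e2 *: e1 + (- f e1) *: e2.
have fw : f w = 0 by rewrite /w sfD !sfZ; ring.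
have w0 : w != 0.
  apply/eqP => /he [f2 /eqP]; rewrite oppr_eq0 => /eqP f1.
  have [a [b y0E]] := hs y0; case: hf => _ [_].
  by rewrite y0E sfD !sfZ f1 f2 !mulr0 addr0 => /eqP; rewrite eq_sym oner_eq0.
by exists (`|w|^-1 *: w); rewrite normfZV // sfZ fw mulr0.
Qed.

End SupportFunctional.

Lemma bj_orth_lin_indep2 (R : realType) (Y : normedModType R) (y0 w : Y) :
  y0 != 0 -> w != 0 -> bj_orth y0 w -> lin_indep2 y0 w.
Proof.
move=> y00 w0 hbj a b e.
have [a0|a0] := eqVneq a 0.
  by move: e; rewrite a0 scale0r add0r => /eqP; rewrite scaler_eq0 (negPf w0) orbF => /eqP.
have y0E : y0 + (b / a) *: w = a^-1 *: (a *: y0 + b *: w).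
  by rewrite scalerDr !scalerA mulVf // scale1r mulrC.
by have := hbj (b / a); rewrite y0E e scaler0 normr0 normr_le0 (negPf y00).
Qed.

Section Smooth.
Variables (R : realType) (Y : normedModType R).
Hypothesis hdim : dim_eq2 Y.
Variables y0 w : Y.
Hypotheses (hy0 : `|y0| = 1) (hw : `|w| = 1) (hbj : bj_orth y0 w).

Lemma bj_orth_support_functional :
  exists g, support_functional y0 g /\ forall y, exists b, y = g y *: y0 + b *: w.
Proof.
have hind : lin_indep2 y0 w.
  by apply: bj_orth_lin_indep2 => //; rewrite -normr_eq0 ?hy0 ?hw oner_eq0.
have /choice [g hg] : forall y, exists a, exists b, y = a *: y0 + b *: w.
  exact: lin_indep2_span.
have /choice [h hh] : forall y, exists b, y = g y *: y0 + b *: w by [].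
exists g; split=> //; split; [|split].
- move=> a x y.
  have E : a *: x + y = (a * g x + g y) *: y0 + (a * h x + h y) *: w.
    by rewrite {1}(hh x) {1}(hh y) scalerDr !scalerA addrACA -!scalerDl.
  by have [-> _] := lin_indep2_coordI hind (etrans (esym (hh _)) E).
- move=> y; have [->|gy0] := eqVneq (g y) 0; first by rewrite normr0.
  rewrite [in X in _ <= X](hh y) -[g y *: y0 + _](scalerKV gy0) scalerDr !scalerA.
  rewrite mulVf // scale1r normrZ -[X in X <= _]mulr1.
  by apply: ler_wpM2l => //; rewrite -hy0; exact: hbj.
- have E : y0 = 1 *: y0 + 0 *: w by rewrite scale1r scale0r addr0.
  by have [-> _] := lin_indep2_coordI hind (etrans (esym (hh _)) E).
Qed.

Lemma smooth_kernel_span f v :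
  (forall g, support_functional y0 g -> forall y, g y = f y) ->
  f v = 0 -> exists b, v = b *: w.
Proof.
move=> huniq fv; have [g [hg hgw]] := bj_orth_support_functional.
by have [b ->] := hgw v; exists b; rewrite (huniq _ hg) fv scale0r add0r.
Qed.

End Smooth.

Section LinearMap.
Variables (R : realType) (H Y : normedModType R) (A : H -> Y).
Hypothesis lA : linear A.

Lemma lin0 : A 0 = 0.
Proof.
by have := lA 1 0 0; rewrite scaler0 addr0 scale1r => h; apply: (addrI (A 0)); rewrite addr0 -h.
Qed.

Lemma linZ c x : A (c *: x) = c *: A x.
Proof. by rewrite -[c *: x]addr0 lA lin0 addr0. Qed.

Lemma linD x y : A (x + y) = A x + A y.
Proof. by have := lA 1 x y; rewrite !scale1r. Qed.

Lemma linB x y : A (x - y) = A x - A y.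
Proof. by rewrite linD -scaleN1r linZ scaleN1r. Qed.

End LinearMap.

Section OperatorNorm.
Variables (R : realType) (H Y : normedModType R) (A : H -> Y).
Hypothesis bA : bounded_op A.

Let opnorm_set_ub : has_ubound [set `|A x| | x in [set x : H | `|x| <= 1]].
Proof.
have [_ [k hk]] := bA; exists `|k| => _ [x /= hx <-].
apply: le_trans (hk x) _; apply: le_trans (ler_norm _) _.
by rewrite normrM normr_id ler_piMr.
Qed.

Let opnorm_set_neq0 : [set `|A x| | x in [set x : H | `|x| <= 1]] !=set0.
Proof. by exists `|A 0|, 0 => //=; rewrite normr0. Qed.

Lemma opnorm_le x : `|A x| <= opnorm A * `|x|.
Proof.
have [->|x0] := eqVneq x 0; first by rewrite (lin0 bA.1) !normr0 mulr0.
have nx : 0 < `|x| by rewrite normr_gt0.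
have hx : `| `|x|^-1 *: x| <= 1 by rewrite normfZV.
have := ub_le_sup opnorm_set_ub (ex_intro2 _ _ (`|x|^-1 *: x) hx erefl).
by rewrite (linZ bA.1) normrZ normfV normr_id -/(opnorm A) ler_pdivrMl // mulrC.
Qed.

Lemma opnorm_approx e : 0 < e -> exists x, `|x| <= 1 /\ opnorm A - e < `|A x|.
Proof.
move=> e0; have [_ [x hx <-] hr] := sup_adherent e0 (conj opnorm_set_neq0 opnorm_set_ub).
by exists x.
Qed.

Lemma opnorm_ub c : (forall x, `|x| <= 1 -> `|A x| <= c) -> opnorm A <= c.
Proof. by move=> h; apply: ge_sup opnorm_set_neq0 _ => _ [x hx <-]; apply: h. Qed.

End OperatorNorm.

Lemma in_unit_ball_opP (R : realType) (H Y : normedModType R) (A : H -> Y) :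
  in_unit_ball_op A <-> linear A /\ forall x, `|A x| <= `|x|.
Proof.
split=> [[bA hA1] | [lA hA]].
  split=> [|x]; first exact: bA.1.
  by apply: le_trans (opnorm_le bA x) _; rewrite ler_piMl.
have bA : bounded_op A by split=> //; exists 1 => x; rewrite mul1r.
by split=> //; apply: opnorm_ub => // x; apply: le_trans.
Qed.

Lemma rank_one_factor (R : realType) (H Y : normedModType R) (T : H -> Y) :
  rank_one T -> exists Y0 (phi : H -> R), `|Y0| = 1 /\ forall x, T x = phi x *: Y0.
Proof.
case=> [[y0 [y00 /choice [c hc]]] _].
exists (`|y0|^-1 *: y0), (fun x => c x * `|y0|); split=> [|x]; first exact: normfZV.
by rewrite scalerA -mulrA mulfV ?normr_eq0 // mulr1.
Qed.

Lemma rank_one_ip_repr (R : realType) (H : completeNormedModType R) (Y : normedModType R)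
    (ip : H -> H -> R) (T : H -> Y) :
  is_inner_product ip -> bounded_op T -> rank_one T -> opnorm T = 1 ->
  exists u Y0, `|u| = 1 /\ `|Y0| = 1 /\ forall x, T x = ip x u *: Y0.
Proof.
move=> hip bT /rank_one_factor [Y0 [phi [hY0 hT]]] hT1.
have Y00 : Y0 != 0 by rewrite -normr_eq0 hY0 oner_eq0.
have scaleY0_inj a b : a *: Y0 = b *: Y0 -> a = b.
  by move/eqP; rewrite -subr_eq0 -scalerBl scaler_eq0 (negPf Y00) orbF subr_eq0 => /eqP.
have phiZD a x y : phi (a *: x + y) = a * phi x + phi y.
  by apply: scaleY0_inj; rewrite -hT bT.1 !hT scalerDl scalerA.
have phiN x : phi (- x) = - phi x.
  by apply: scaleY0_inj; rewrite -hT -scaleN1r (linZ bT.1) hT scalerA mulN1r.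
have normT x : `|T x| = `|phi x| by rewrite hT normrZ hY0 mulr1.
have phi_le x : `|phi x| <= `|x|.
  by rewrite -normT; have := opnorm_le bT x; rewrite hT1 mul1r.
have phi_sup e : 0 < e -> exists x, `|x| <= 1 /\ 1 - e < phi x.
  move=> /(opnorm_approx bT) [x [hx]]; rewrite hT1 normT.
  have [phi_ge0 | phi_lt0] := lerP 0 (phi x); first by rewrite ger0_norm //; exists x.
  by rewrite ltr0_norm // -phiN; exists (- x); rewrite normrN.
have [u [hu hphi]] := riesz_representation hip phiZD phi_le phi_sup.
by exists u, Y0; split=> //; split=> // x; rewrite hT hphi.
Qed.

Lemma scale_comb2D (R : realType) (Y : normedModType R) (p q : Y) a c1 c2 d1 d2 :
  a *: (c1 *: p + c2 *: q) + (d1 *: p + d2 *: q) = (a * c1 + d1) *: p + (a * c2 + d2) *: q.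
Proof. by rewrite scalerDr !scalerA addrACA -!scalerDl. Qed.

Section UnitBall.
Variables (R : realType) (Y : normedModType R).

Lemma norm_segment_le1 (p q : Y) k s : 0 <= k -> -k <= s <= 1 ->
  `|p + q| <= 1 -> `|p - k *: q| <= 1 -> `|p + s *: q| <= 1.
Proof.
move=> k0 /andP[ks s1] hpq hpkq; set la := (s + k) / (1 + k).
have k1 : 0 < 1 + k by lra.
have la0 : 0 <= la by apply: divr_ge0; lra.
have la1 : la <= 1 by rewrite ler_pdivrMr // mul1r; lra.
have e : p + s *: q = la *: (p + q) + (1 - la) *: (p - k *: q).
  rewrite scalerDr scalerBr !scalerA addrACA -scalerDl subrKC scale1r -scalerBl.
  by congr (_ + _ *: _); rewrite /la; field; lra.
clearbody la; rewrite {}e.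
have la1' : 0 <= 1 - la by rewrite subr_ge0.
apply: le_trans (ler_normD _ _) _; rewrite !normrZ (ger0_norm la0) (ger0_norm la1').
apply: le_trans (lerD (ler_wpM2l la0 hpq) (ler_wpM2l la1' hpkq)) _.
by rewrite !mulr1 subrKC.
Qed.

Lemma circle_bound_le_sqrt (p q : Y) :
  (forall a b, a ^+ 2 + b ^+ 2 = 1 -> `|a *: p + b *: q| <= 1) ->
  forall a b, `|a *: p + b *: q| <= Num.sqrt (a ^+ 2 + b ^+ 2).
Proof.
move=> hpq a b; set rho := Num.sqrt _.
have [rho0|rho_gt0] := eqVneq rho 0.
  move/eqP: rho0; rewrite sqrtr_eq0 => hab.
  have a0 : a = 0 by apply/eqP; rewrite -sqrf_eq0 eq_le sqr_ge0 andbT; have := sqr_ge0 b; nra.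
  have b0 : b = 0 by apply/eqP; rewrite -sqrf_eq0 eq_le sqr_ge0 andbT; have := sqr_ge0 a; nra.
  by rewrite a0 b0 !scale0r addr0 normr0; exact: sqrtr_ge0.
have rho_pos : 0 < rho by rewrite lt_def rho_gt0 sqrtr_ge0.
have -> : a *: p + b *: q = rho *: ((a / rho) *: p + (b / rho) *: q).
  by rewrite scalerDr !scalerA !(mulrC rho) !divfK.
rewrite normrZ gtr0_norm // -[X in _ <= X]mulr1 ler_pM2l //; apply: hpq.
have ab_ge0 : 0 <= a ^+ 2 + b ^+ 2 by rewrite addr_ge0 ?sqr_ge0.
rewrite !expr_div_n -mulrDl sqr_sqrtr // divff //.
by apply: contraNneq rho_gt0; rewrite /rho => ->; rewrite sqrtr0.
Qed.

End UnitBall.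

Section RankOneOperator.
Variables (R : realType) (H Y : normedModType R) (ip : H -> H -> R).
Hypothesis hip : is_inner_product ip.
Variables (u : H) (Y0 : Y) (T : H -> Y).
Hypotheses (hu : `|u| = 1) (hY0 : `|Y0| = 1) (hT : forall x, T x = ip x u *: Y0).

Let huu : ip u u = 1.
Proof. by rewrite -(sqr_norm_ip hip) hu expr1n. Qed.

Lemma MT_rank_one : opnorm T = 1 -> MT T = [set u; - u].
Proof.
move=> hT1; apply/seteqP; split=> x; rewrite /MT /= hT1 hT normrZ hY0 mulr1.
  move=> [hx hxu]; set a := ip x u in hxu.
  have a2 : a ^+ 2 = 1 by rewrite -real_normK ?num_real // hxu expr1n.
  have : `|x - a *: u| ^+ 2 = 0.
    by have := sqr_norm_comb hip 1 (- a) x u; rewrite scale1r scaleNr hx hu -/a => ->; nra.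
  move/eqP; rewrite sqrf_eq0 normr_eq0 subr_eq0 => /eqP ->.
  move/eqP: a2; rewrite sqrf_eq1 => /orP[] /eqP ->.
    by left; rewrite scale1r.
  by right; rewrite scaleN1r.
case=> ->; split; rewrite ?normrN ?huu ?normr1 //.
by rewrite -scaleN1r (ipZl hip) huu mulr1 normrN normr1.
Qed.

Lemma CPP_of_circle_bounds (v : Y) k : dim_eq2 Y -> smooth Y -> v != 0 -> 0 < k ->
  (forall a b, a ^+ 2 + b ^+ 2 = 1 -> `|a *: Y0 + b *: v| <= 1) ->
  (forall a b, a ^+ 2 + b ^+ 2 = 1 -> `|a *: Y0 - k *: (b *: v)| <= 1) ->
  CPP u Y0.
Proof.
move=> hdY hsm v0 k0 hA hB; have [f [hf huniq]] := hsm Y0 hY0.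
have fv : f v = 0 := support_functional_circle_eq0 hf hA.
set m := Num.min 1 k.
have m0 : 0 < m by rewrite lt_min ltr01 k0.
have nv : 0 < `|v| by rewrite normr_gt0.
split=> //; split=> //; exists 1, (m * `|v|); do 2!split=> //; first exact: mulr_gt0.
move=> z w a b hbz hz hbw hw [_ hsph].
have huz : ip u z = 0 := (bj_orthP hip u hz).1 hbz.
have hab : a ^+ 2 + b ^+ 2 = 1.
  by rewrite -(sqr_norm_orthonormal hip hu hz huz) hsph expr1n.
have [c vE] := smooth_kernel_span hdY hY0 hw hbw huniq fv.
have c0 : c != 0 by apply: contraNneq v0 => c0; rewrite vE c0 scale0r.
have hc : `|c| = `|v| by rewrite vE normrZ hw mulr1.
set s := m * `|v| / c.
have hs : `|s| = m by rewrite normrM normfV hc gtr0_norm ?mulr_gt0 // mulfK ?gt_eqF.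
have -> : a *: Y0 + (b * (m * `|v|)) *: w = a *: Y0 + s *: (b *: v).
  by rewrite [in RHS]vE !scalerA; congr (_ + _ *: _); rewrite /s; field.
apply: norm_segment_le1 (ltW k0) _ (hA a b hab) (hB a b hab).
have : -m <= s <= m by rewrite -ler_norml hs.
have : m <= 1 by rewrite ge_min lexx.
have : m <= k by rewrite ge_min lexx orbT.
move=> ? ? /andP[? ?]; apply/andP; split; lra.
Qed.

Lemma exists_orth_unit_not_in_ker (A : H -> Y) x1 :
  linear A -> A u = Y0 -> A x1 != T x1 -> exists z, `|z| = 1 /\ ip u z = 0 /\ A z != 0.
Proof.
move=> lA Au Ax1; set z1 := x1 - ip x1 u *: u.
have Az1 : A z1 = A x1 - T x1 by rewrite (linB lA) (linZ lA) Au hT.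
have z10 : z1 != 0.
  by apply: contraNneq Ax1 => z10; rewrite -subr_eq0 -Az1 z10 (lin0 lA).
exists (`|z1|^-1 *: z1); split; first exact: normfZV.
split; first by rewrite (ipZr hip) (ipC hip) (ipBl hip) (ipZl hip) huu mulr1 subrr mulr0.
by rewrite (linZ lA) scaler_eq0 negb_or invr_eq0 normr_eq0 z10 Az1 subr_eq0.
Qed.

Lemma CPP_of_nonextreme (A B : H -> Y) t x1 :
  dim_eq2 Y -> smooth Y -> strictly_convex Y ->
  in_unit_ball_op A -> in_unit_ball_op B -> 0 < t < 1 ->
  (forall x, T x = t *: A x + (1 - t) *: B x) -> A x1 <> T x1 -> CPP u Y0.
Proof.
move=> hdY hsm hsc /in_unit_ball_opP[lA hA] /in_unit_ball_opP[lB hB] t01 hdec /eqP Ax1.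
have /andP[t0 t1] := t01.
have Tu : T u = Y0 by rewrite hT huu scale1r.
have Au : A u = Y0.
  have hAu : `|A u| <= 1 by rewrite -hu.
  have hBu : `|B u| <= 1 by rewrite -hu.
  have := hdec u; rewrite Tu => Y0E.
  have AB := strictly_convex_comb_eq hsc hAu hBu t01 (etrans (esym (congr1 _ Y0E)) hY0).
  by rewrite Y0E -AB -scalerDl subrKC scale1r.
have [z [hz [huz Az0]]] := exists_orth_unit_not_in_ker lA Au Ax1.
set v := A z; set k := t / (1 - t).
have T_span a b : T (a *: u + b *: z) = a *: Y0.
  by rewrite hT (ipDl hip) !(ipZl hip) huu (ipC hip) huz mulr0 mulr1 addr0.
have A_span a b : A (a *: u + b *: z) = a *: Y0 + b *: v.
  by rewrite (linD lA) !(linZ lA) Au.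
have B_span a b : B (a *: u + b *: z) = a *: Y0 - k *: (b *: v).
  have t1' : 1 - t != 0 by rewrite subr_eq0 gt_eqF.
  apply: (scalerI t1'); apply: (addrI (t *: (a *: Y0 + b *: v))).
  rewrite -A_span -hdec T_span A_span scalerBr [(1 - t) *: (k *: _)]scalerA mulrC divfK //.
  by rewrite scalerDr addrACA subrr addr0 -scalerDl subrKC scale1r.
apply: (CPP_of_circle_bounds (v := v) (k := k)) => // [|a b hab|a b hab].
- by rewrite divr_gt0 // subr_gt0.
- by rewrite -A_span -(norm_orthonormal_circle hip hu hz huz hab).
- by rewrite -B_span -(norm_orthonormal_circle hip hu hz huz hab).
Qed.

Lemma CPP_circle_bound z w : `|z| = 1 -> ip u z = 0 -> bj_orth Y0 w -> `|w| = 1 ->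
  CPP u Y0 -> exists2 ep, 0 < ep &
    forall a b, a ^+ 2 + b ^+ 2 = 1 -> `|a *: Y0 + b *: (ep *: w)| <= 1.
Proof.
move=> hz huz hbw hw [_ [_ [r [mu [r0 [mu0 hcpp]]]]]].
have hbz : bj_orth u z := (bj_orthP hip u hz).2 huz.
have hbNw : bj_orth Y0 (- w) by move=> l; rewrite scalerN -scaleNr.
have hNw : `|- w| = 1 by rewrite normrN.
set ep := Num.min mu (r ^+ 2 / 2).
have ep0 : 0 < ep by rewrite lt_min mu0 divr_gt0 // exprn_gt0.
have ep_mu : ep <= mu by rewrite ge_min lexx.
have ep_r : ep <= r ^+ 2 / 2 by rewrite ge_min lexx orbT.
exists ep => //.
(* Near u the CPP bounds hold for both w and -w, and eps <= mu interpolates between them;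
   near -u use symmetry; elsewhere |a| <= 1 - r^2 / 2 and the triangle inequality suffices. *)
have near_u a b : a ^+ 2 + b ^+ 2 = 1 -> (a - 1) ^+ 2 + b ^+ 2 < r ^+ 2 ->
    `|a *: Y0 + b *: (ep *: w)| <= 1.
  move=> hab hr.
  have hs : (oball u r `&` sphere (V := H)) (a *: u + b *: z).
    split; last exact (norm_orthonormal_circle hip hu hz huz hab).
    rewrite /oball /= (_ : _ - u = (a - 1) *: u + b *: z); last first.
      by rewrite scalerBl scale1r addrAC.
    by rewrite -(ltr_pXn2r (n := 2)) ?nnegrE ?(ltW r0) // (sqr_norm_orthonormal hip hu hz huz).
  have hP := hcpp z w a b hbz hz hbw hw hs.
  have := hcpp z (- w) a b hbz hz hbNw hNw hs.
  rewrite scalerN -(scale1r ((b * mu) *: w)) => hM.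
  rewrite scalerA (_ : b * ep = ep / mu * (b * mu)); last by field; rewrite gt_eqF.
  rewrite -scalerA; apply: norm_segment_le1 ler01 _ hP hM.
  have : 0 < ep / mu by rewrite divr_gt0.
  have : ep / mu <= 1 by rewrite ler_pdivrMr ?mul1r.
  move=> ? ?; apply/andP; split; lra.
move=> a b hab.
have [hr | hr] := ltrP ((a - 1) ^+ 2 + b ^+ 2) (r ^+ 2); first exact: near_u.
have [hr' | hr'] := ltrP ((a + 1) ^+ 2 + b ^+ 2) (r ^+ 2).
  have := near_u (- a) (- b); rewrite !scaleNr -(opprD (a *: Y0)) normrN !sqrrN.
  by apply=> //; rewrite -opprD sqrrN.
apply: le_trans (ler_normD _ _) _; rewrite !normrZ hY0 hw !mulr1 (gtr0_norm ep0).
have : `|a| <= 1 - r ^+ 2 / 2 by rewrite ler_norml; apply/andP; split; nra.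
have : `|b| <= 1 by rewrite -(expr_le1 (n := 2)) // real_normK ?num_real //; nra.
by have := normr_ge0 b; nra.
Qed.

Lemma not_extreme_of_CPP : dim_ge2 H -> dim_eq2 Y -> smooth Y ->
  CPP u Y0 -> ~ extreme_contraction T.
Proof.
move=> hdH hdY hsm hcpp [_ [_ hext]].
have [z [hz hzu]] := exists_orthogonal_unit hip hdH hu.
have huz : ip u z = 0 by rewrite (ipC hip).
have [f [hf _]] := hsm Y0 hY0.
have [w [hw fw]] := support_functional_kernel hf hdY.
have [ep ep0 hep] := CPP_circle_bound hz huz (support_functional_bj_orth hf hY0 fw) hw hcpp.
pose F s x := ip x u *: Y0 + (s * ip x z) *: (ep *: w).
have F_ball s : s ^+ 2 = 1 -> in_unit_ball_op (F s).
  move=> s1; apply/in_unit_ball_opP; split=> [a x y | x].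
    by rewrite /F scale_comb2D !(ipZDl hip); congr (_ *: _ + _ *: _); ring.
  apply: le_trans (circle_bound_le_sqrt hep _ _) _.
  rewrite exprMn s1 mul1r -[`|x|]normr_id -sqrtr_sqr ler_sqrt ?sqr_ge0 //.
  exact (bessel hip hu hz huz x).
have T_avg x : T x = 2^-1 *: F 1 x + (1 - 2^-1) *: F (-1) x.
  rewrite /F hT [(1 - 2^-1) *: _]scalerDr !(scalerA (1 - 2^-1)) scale_comb2D.
  by rewrite -[LHS]addr0 -(scale0r (ep *: w)); congr (_ *: _ + _ *: _); field.
have half01 : ((0 : R) < 2^-1) && (2^-1 < 1 :> R) by apply/andP; split; lra.
have hzz : ip z z = 1 by rewrite -(sqr_norm_ip hip) hz expr1n.
have F1 := F_ball 1 (expr1n _ _).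
have FN1 := F_ball (-1) (etrans (sqrrN 1) (expr1n _ 2)).
case: (hext _ _ _ F1 FN1 half01 T_avg z).
rewrite /F hT hzu hzz scale0r !add0r mul1r scale1r => /eqP.
by rewrite scaler_eq0 (gt_eqF ep0) -normr_eq0 hw oner_eq0.
Qed.

Lemma extreme_of_not_CPP : dim_eq2 Y -> smooth Y -> strictly_convex Y ->
  bounded_op T -> opnorm T = 1 -> ~ CPP u Y0 -> extreme_contraction T.
Proof.
move=> hdY hsm hsc bT hT1 hncpp; split; first by split=> //; rewrite hT1.
split=> // A B t hA hB t01 hdec x.
have fixed A' B' t' : in_unit_ball_op A' -> in_unit_ball_op B' -> 0 < t' < 1 ->
    (forall y, T y = t' *: A' y + (1 - t') *: B' y) -> A' x = T x.
  move=> hA' hB' ht' hdec'; apply: contrapT => hne; apply: hncpp.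
  exact: CPP_of_nonextreme hdY hsm hsc hA' hB' ht' hdec' hne.
split; first exact: fixed _ _ _ hA hB t01 hdec.
have t01' : 0 < 1 - t < 1 by case/andP: t01 => ? ?; apply/andP; split; lra.
by apply: fixed _ _ _ hB hA t01' _ => y; rewrite hdec subKr addrC.
Qed.

End RankOneOperator.

Unset Implicit Arguments.

Theorem mainTheorem9 (R : realType) (H Y : completeNormedModType R)
  (ip : H -> H -> R) (T : H -> Y) :
  is_inner_product ip -> dim_ge2 H ->
  dim_eq2 Y -> smooth Y -> strictly_convex Y ->
  bounded_op T -> rank_one T -> opnorm T = 1 ->
  exists x : H, `|x| = 1 /\ MT T = [set x; - x] /\
    (extreme_contraction T <-> ~ CPP x (T x)).
Proof.
move=> hip hdH hdY hsm hsc bT hr hT1.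
have [u [Y0 [hu [hY0 hT]]]] := rank_one_ip_repr hip bT hr hT1.
have Tu : T u = Y0 by rewrite hT -(sqr_norm_ip hip) hu expr1n scale1r.
exists u; split=> //; split; first exact: MT_rank_one hY0 hT hT1.
rewrite Tu; split.
- by move=> hext hcpp; exact (not_extreme_of_CPP hip hu hY0 hT hdH hdY hsm hcpp hext).
- exact (extreme_of_not_CPP hip hu hY0 hT hdY hsm hsc bT hT1).
Qed.
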